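(* Let $\{\boldsymbol y^{MSLP}_n\}_{n\in\mathcal T}$, $\{u^{MSLP}_n\}_{n\in\mathcal T\setminus\{1\}}$ be the values of the $\boldsymbol y$- and $u$-variables in an optimal solution of the linear programming relaxation of the multistage model (integrality of $\boldsymbol x$ dropped). Define $\boldsymbol x^{MS}_1=\boldsymbol B_{t_1}\boldsymbol y^{MSLP}_1$, $\boldsymbol x^{MS}_n=\max_{m\in\mathcal P(n)}\boldsymbol B_{t_m}\boldsymbol y^{MSLP}_m-\max_{m\in\mathcal P(a(n))}\boldsymbol B_{t_m}\boldsymbol y^{MSLP}_m$ ($n\ne1$), $\eta^{MS}_n=\max_{m\in\mathcal C(n)}\{\boldsymbol f_{t_m}^{\mathsf T}\sum_{l\in\mathcal P(m)}\boldsymbol x^{MS}_l+\boldsymbol c_{t_m}^{\mathsf T}\boldsymbol y^{MSLP}_m-u^{MSLP}_m\}$ ($n\notin\mathcal L$), $\boldsymbol x^{TS}_1=\lceil\boldsymbol B_{t_1}\boldsymbol y^{MSLP}_1\rceil$, $\boldsymbol x^{TS}_n=\max_{m\in\mathcal P(n)}\lceil\max_{l\in\mathcal T_{t_m}}\boldsymbol B_{t_l}\boldsymbol y^{MSLP}_l\rceil-\max_{m\in\mathcal P(a(n))}\lceil\max_{l\in\mathcal T_{t_m}}\boldsymbol B_{t_l}\boldsymbol y^{MSLP}_l\rceil$ ($n\ne1$), $\eta^{TS}_n=\max_{m\in\mathcal C(n)}\{\boldsymbol f_{t_m}^{\mathsf T}\sum_{l\in\mathcal P(m)}\boldsymbol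 x^{TS}_l+\boldsymbol c_{t_m}^{\mathsf T}\boldsymbol y^{MSLP}_m-u^{MSLP}_m\}$ ($n\notin\mathcal L$). Then $$\mathrm{VMS}_R\le\mathrm{VMS}_R^{UB}:=\boldsymbol f_{t_1}^{\mathsf T}\big(\lceil\boldsymbol B_{t_1}\boldsymbol y^{MSLP}_1\rceil-\boldsymbol B_{t_1}\boldsymbol y^{MSLP}_1\big)+\sum_{n\in\mathcal T\setminus\{1\}}p_n(1-\lambda_{t_n})\boldsymbol f_{t_n}^{\mathsf T}\Big(\max_{m\in\mathcal P(n)}\big\lceil\max_{l\in\mathcal T_{t_m}}\boldsymbol B_{t_l}\boldsymbol y^{MSLP}_l\big\rceil-\max_{m\in\mathcal P(n)}\boldsymbol B_{t_m}\boldsymbol y^{MSLP}_m\Big)+\sum_{n\in\mathcal T\setminus\mathcal L}p_n\lambda_{t_n+1}\big(\eta^{TS}_n-\eta^{MS}_n\big).$$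
   Context: Setting. Fix integers $T\ge 2$ (periods), $M\ge1$ (facilities), $N\ge1$ (customer sites). For each period $t$: maintenance costs $f_{ti}\ge 0$ forming $\boldsymbol f_t\in\mathbb R^M$; operational costs $c_{tij}\ge0$ forming $\boldsymbol c_t\in\mathbb R^{MN}$; capacities $h_{ti}>0$. Vectors $\boldsymbol y\in\mathbb R^{MN}$ are indexed by pairs $(i,j)$; $(\boldsymbol A_t\boldsymbol y)_j=\sum_{i=1}^M y_{ij}$ defines $\boldsymbol A_t$ and $(\boldsymbol B_t\boldsymbol y)_i=\frac1{h_{ti}}\sum_{j=1}^N y_{ij}$ defines $\boldsymbol B_t$. Ceilings and maxima of vectors are componentwise. Scenario tree: a finite rooted tree with node set $\mathcal T$, root $1$, all root-to-leaf paths having $T$ nodes; $\mathcal T_t$ nodes at depth $t$, $t_n$ the period of $n$, $\mathcal L=\mathcal T_T$ the leaves, $a(n)$ the parent of $n\ne1$, $\mathcal C(n)$ the children of $n$, $\mathcal P(n)$ the nodes on the root-to-$n$ path (inclusive). Probabilities $p_n>0$ with $\sum_{n\in\mathcal T_t}p_n=1$ and $\sum_{m\in\mathcal C(n)}p_m=p_n$ ($n\notin\mathcal L$); demands $\boldsymbol d_n\in\mathbb R^N_{\ge0}$. Risk parameters $\lambda_t\in[0,1]$, $\alpha_t\in(0,1)$, $t=2,\ldots,T$. $\tilde{\boldsymbol f}_n=\boldsymbol f_{t_n}$ if $n=1$, else $(1-\lambda_{t_n})\boldsymbol f_{t_n}$; $\tilde{\boldsymbol c}_n=\boldsymbol c_{t_n}$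 if $n=1$, else $(1-\lambda_{t_n})\boldsymbol c_{t_n}$; $\tilde\lambda_n=0$ if $n\in\mathcal L$, else $\lambda_{t_n+1}$; $\tilde\alpha_n=0$ if $n=1$, else $\lambda_{t_n}/(1-\alpha_{t_n})$. Multistage model: $z^{MS}_R=\min\sum_{n\in\mathcal T}p_n\big(\tilde{\boldsymbol f}_n^{\mathsf T}\sum_{m\in\mathcal P(n)}\boldsymbol x_m+\tilde{\boldsymbol c}_n^{\mathsf T}\boldsymbol y_n+\tilde\lambda_n\eta_n+\tilde\alpha_nu_n\big)$ over $\boldsymbol x_n\in\mathbb Z^M_+$, $\boldsymbol y_n\in\mathbb R^{MN}_+$ ($n\in\mathcal T$), $\eta_n\in\mathbb R$ ($n\notin\mathcal L$), $u_n\ge0$ ($n\ne1$), subject to $\boldsymbol A_{t_n}\boldsymbol y_n=\boldsymbol d_n$, $\boldsymbol B_{t_n}\boldsymbol y_n\le\sum_{m\in\mathcal P(n)}\boldsymbol x_m$ ($n\in\mathcal T$) and $u_n+\eta_{a(n)}\ge\boldsymbol f_{t_n}^{\mathsf T}\sum_{m\in\mathcal P(n)}\boldsymbol x_m+\boldsymbol c_{t_n}^{\mathsf T}\boldsymbol y_n$ ($n\ne1$). Two-stage model: the multistage model plus the constraints $\boldsymbol x_m=\boldsymbol x_n$ for all $m,n\in\mathcal T_t$, $t=1,\ldots,T$; optimal value $z^{TS}_R$. $\mathrm{VMS}_R:=z^{TS}_R-z^{MS}_R$. *)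

From HB Require Import structures.
From mathcomp Require Import all_boot all_order all_algebra.
From mathcomp Require Import boolp classical_sets reals constructive_ereal ereal.
Set Implicit Arguments. Unset Strict Implicit. Unset Printing Implicit Defensive.
Import Order.TTheory GRing.Theory Num.Theory.
Local Open Scope ring_scope.

Section Model.
Variable R : realType.
Variable V : finType.          (* nodes of the scenario tree *)
Variable r : V.
Variable a : V -> V.           (* parent a(n) (value at the root irrelevant) *)
Variable tn : V -> nat.
Variable T M N : nat.

Definition anc (n : V) : {set V} :=
  [set m | [exists k : 'I_(tn n), iter k a n == m]].
Definition children (n : V) : {set V} := [set m | (m != r) && (a m == n)].
Definition level (t : nat) : {set V} := [set m | tn m == t].

Definition scenario_tree : Prop :=
  [/\ tn r = 1%N,
      (forall n, n != r -> tn n = (tn (a n)).+1),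
      (forall n, tn n = 1%N -> n = r),
      (forall n, (1 <= tn n <= T)%N) &
      (forall n, (tn n < T)%N -> exists m, m != r /\ a m = n)].

(* maximum of F over a (nonempty) finite set S; 0 by convention on set0 *)
Definition smax (S : {set V}) (F : V -> R) : R :=
  if [pick m in S] is Some m0 then \big[Num.max/F m0]_(m in S) F m else 0.

Definition ceilR (x : R) : R := (Num.ceil x)%:~R.

Variable f : nat -> 'I_M -> R.
Variable c : nat -> 'I_M -> 'I_N -> R.
Variable h : nat -> 'I_M -> R.
Variable p : V -> R.
Variable d : V -> 'I_N -> R.
Variable lam alp : nat -> R.

Definition Aop (y : 'I_M -> 'I_N -> R) (j : 'I_N) : R := \sum_(i < M) y i j.
Definition Bop (t : nat) (y : 'I_M -> 'I_N -> R) (i : 'I_M) : R :=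
  (\sum_(j < N) y i j) / h t i.

Definition cum (x : V -> 'I_M -> R) (n : V) (i : 'I_M) : R :=
  \sum_(m in anc n) x m i.

Definition cost (x : V -> 'I_M -> R) (y : V -> 'I_M -> 'I_N -> R) (n : V) : R :=
  \sum_(i < M) f (tn n) i * cum x n i
  + \sum_(i < M) \sum_(j < N) c (tn n) i j * y n i j.

Definition wfac (n : V) : R := if n == r then 1 else 1 - lam (tn n).
Definition lamtil (n : V) : R := if tn n == T then 0 else lam (tn n).+1.
Definition alptil (n : V) : R :=
  if n == r then 0 else lam (tn n) / (1 - alp (tn n)).

(* objective; eta_n (n leaf) and u_1 are dummy coordinates with weight 0 *)
Definition obj (x : V -> 'I_M -> R) (y : V -> 'I_M -> 'I_N -> R)
    (eta u : V -> R) : R :=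
  \sum_(n : V) p n *
    ( (\sum_(i < M) (wfac n * f (tn n) i) * cum x n i)
    + (\sum_(i < M) \sum_(j < N) (wfac n * c (tn n) i j) * y n i j)
    + lamtil n * eta n + alptil n * u n).

Definition feasLP (x : V -> 'I_M -> R) (y : V -> 'I_M -> 'I_N -> R)
    (eta u : V -> R) : Prop :=
  [/\ (forall n i, 0 <= x n i),
      (forall n i j, 0 <= y n i j),
      (forall n j, Aop (y n) j = d n j),
      (forall n i, Bop (tn n) (y n) i <= cum x n i) &
      (forall n, n != r -> 0 <= u n /\ cost x y n <= u n + eta (a n))].

Definition feasMS x y eta u : Prop :=
  feasLP x y eta u /\ (forall n i, x n i \is a Num.int).

Definition feasTS x y eta u : Prop :=
  feasMS x y eta u /\ (forall m n, tn m = tn n -> x m = x n).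

Definition zMS : \bar R :=
  ereal_inf [set z | exists x y eta u, feasMS x y eta u /\ z = (obj x y eta u)%:E].
Definition zTS : \bar R :=
  ereal_inf [set z | exists x y eta u, feasTS x y eta u /\ z = (obj x y eta u)%:E].
Definition VMS : \bar R := (zTS - zMS)%E.

Definition LPoptimal x y eta u : Prop :=
  feasLP x y eta u /\
  (forall x' y' eta' u', feasLP x' y' eta' u' -> obj x y eta u <= obj x' y' eta' u').

Section Construction.
Variable yLP : V -> 'I_M -> 'I_N -> R.
Variable uLP : V -> R.

Definition By (n : V) (i : 'I_M) : R := Bop (tn n) (yLP n) i.
Definition MB (n : V) (i : 'I_M) : R := smax (anc n) (fun m => By m i).
Definition CL (t : nat) (i : 'I_M) : R := ceilR (smax (level t) (fun l => By l i)).
Definition MC (n : V) (i : 'I_M) : R := smax (anc n) (fun m => CL (tn m) i).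

Definition xMS (n : V) (i : 'I_M) : R :=
  if n == r then By r i else MB n i - MB (a n) i.
Definition xTS (n : V) (i : 'I_M) : R :=
  if n == r then ceilR (By r i) else MC n i - MC (a n) i.
Definition etaMS (n : V) : R :=
  smax (children n) (fun m => cost xMS yLP m - uLP m).
Definition etaTS (n : V) : R :=
  smax (children n) (fun m => cost xTS yLP m - uLP m).

Definition VMS_UB : R :=
  \sum_(i < M) f (tn r) i * (ceilR (By r i) - By r i)
  + \sum_(n | n != r) p n * (1 - lam (tn n)) *
      (\sum_(i < M) f (tn n) i * (MC n i - MB n i))
  + \sum_(n | tn n != T) p n * lam (tn n).+1 * (etaTS n - etaMS n).
End Construction.

End Model.

From Pilot Require Import Defs.
From HB Require Import structures.
From mathcomp Require Import all_boot all_order all_algebra.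
From mathcomp Require Import boolp classical_sets reals constructive_ereal ereal.
From mathcomp Require Import zify ring.
Set Implicit Arguments. Unset Strict Implicit. Unset Printing Implicit Defensive.
Import Order.TTheory GRing.Theory Num.Theory.
Local Open Scope ring_scope.

(* Round the LP solution (y, u) in two ways, keeping y and u.  The cumulative
   capacities x^MS telescope to the running maxima of B_t y along each path;
   they dominate B_t y and are dominated by the LP capacities, so with eta^MS
   they give an LP-feasible point whose objective is at most the LP optimum,
   itself at most z^MS.  The capacities x^TS telescope to running maxima of the
   rounded-up period-wise maxima; they are integral, nonnegative and constant
   on each period, so with eta^TS they are feasible for the two-stage model and
   bound z^TS.  As y and u are shared, the two objectives differ exactly by
   VMS^UB. *)

Section SetMax.
Variables (R : realType) (V : finType).
Implicit Types (S : {set V}) (F : V -> R).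

Lemma le_smax S F m : m \in S -> F m <= smax S F.
Proof.
move=> mS; rewrite /smax; case: pickP => [m0 _|/(_ m)]; last by rewrite mS.
by rewrite (bigD1 m) //= le_max lexx.
Qed.

Lemma smax_le S F B m0 :
  m0 \in S -> (forall m, m \in S -> F m <= B) -> smax S F <= B.
Proof.
move=> m0S leFB; rewrite /smax; case: pickP => [m1 m1S|/(_ m0)]; last by rewrite m0S.
apply: (big_ind (fun v => v <= B)); first exact: leFB.
  by move=> x y hx hy; rewrite ge_max hx hy.
by move=> i /leFB.
Qed.

Lemma smax_attained S F m0 : m0 \in S -> exists2 m, m \in S & smax S F = F m.
Proof.
move=> m0S; rewrite /smax; case: pickP => [m1 m1S|/(_ m0)]; last by rewrite m0S.
apply: (big_ind (fun v => exists2 m, m \in S & v = F m)); first by exists m1.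
  move=> _ _ [mx mxS ->] [my myS ->].
  by have [_|/ltW le] := leP (F mx) (F my); [exists my | exists mx; rewrite ?max_l].
by move=> i iS; exists i.
Qed.

Lemma smax_set1 F v : smax [set v] F = F v.
Proof. by have [m /set1P ->] := smax_attained F (set11 v). Qed.

End SetMax.

Arguments le_smax {R V S F m}.
Arguments smax_le {R V S F B m0}.
Arguments smax_attained {R V S} F {m0}.

Section OptimalValues.
Variables (R : realType) (V : finType) (r : V) (a : V -> V) (tn : V -> nat).
Variables (T M N : nat) (f : nat -> 'I_M -> R) (c : nat -> 'I_M -> 'I_N -> R).
Variables (h : nat -> 'I_M -> R) (p : V -> R) (d : V -> 'I_N -> R) (lam alp : nat -> R).

Local Notation obj := (obj r a tn T f c p lam alp).
Local Notation cum := (@cum R V a tn M).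

Lemma obj_sub x x' y eta eta' u :
  obj x y eta u - obj x' y eta' u =
  \sum_n p n * (\sum_(i < M) wfac r tn lam n * f (tn n) i * (cum x n i - cum x' n i)
                + lamtil tn T lam n * (eta n - eta' n)).
Proof.
rewrite /Defs.obj -sumrB; apply: eq_bigr => n _.
under [X in _ = _ * (X + _)]eq_bigr do rewrite mulrBr.
rewrite sumrB; ring.
Qed.

Lemma zTS_le_obj x y eta u :
  feasTS r a tn f c h d x y eta u ->
  (zTS r a tn T f c h p d lam alp <= (obj x y eta u)%:E)%E.
Proof. by move=> feas; apply: ereal_inf_lbound; exists x, y, eta, u. Qed.

Lemma obj_le_zMS x y eta u :
  LPoptimal r a tn T f c h p d lam alp x y eta u ->
  ((obj x y eta u)%:E <= zMS r a tn T f c h p d lam alp)%E.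
Proof.
move=> [_ opt]; apply: le_ereal_inf_tmp => _ [x' [y' [eta' [u' [[feas _] ->]]]]].
by rewrite lee_fin opt.
Qed.

End OptimalValues.

Section ScenarioTree.
Variables (V : finType) (r : V) (a : V -> V) (tn : V -> nat) (T : nat).
Hypothesis tree : scenario_tree r a tn T.

Local Notation anc := (anc a tn).
Local Notation level := (level tn).

Lemma tn_root : tn r = 1%N. Proof. by case: tree. Qed.

Lemma tn_parent n : n != r -> tn n = (tn (a n)).+1.
Proof. by case: tree => _ + _ _ _; apply. Qed.

Lemma tn_eq1 n : tn n = 1%N -> n = r.
Proof. by case: tree => _ _ + _ _; apply. Qed.

Lemma tn_bounds n : (1 <= tn n <= T)%N.
Proof. by case: tree => _ _ _ + _; apply. Qed.

Lemma tn_nonroot n : n != r -> (2 <= tn n <= T)%N.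
Proof.
by move=> nr; have := tn_bounds n; have := tn_bounds (a n); rewrite (tn_parent nr); lia.
Qed.

Lemma exists_child n : (tn n < T)%N -> exists2 m, m != r & a m = n.
Proof. by case: tree => _ _ _ _ /(_ n) child /child [m [mr <-]]; exists m. Qed.

Lemma tn_iter n k : (k < tn n)%N -> tn (iter k a n) = (tn n - k)%N.
Proof.
elim: k => [|k IH] lt_k; first by rewrite subn0.
have := IH (ltnW lt_k); rewrite iterS; set w := iter k a n => tn_w.
have wr : w != r by apply: contra_eqN tn_w => /eqP ->; rewrite tn_root; lia.
by move: tn_w; rewrite (tn_parent wr); lia.
Qed.

Lemma ancP n m : reflect (exists2 k, (k < tn n)%N & iter k a n = m) (m \in anc n).
Proof.
rewrite inE; apply: (iffP existsP) => [[k /eqP <-]|[k lt_k <-]]; first by exists k.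
by exists (Ordinal lt_k).
Qed.

Lemma anc_refl n : n \in anc n.
Proof. by apply/ancP; exists 0%N => //; case/andP: (tn_bounds n). Qed.

Lemma tn_anc n m : m \in anc n -> (tn m <= tn n)%N.
Proof. by case/ancP => k lt_k <-; rewrite tn_iter //; lia. Qed.

Lemma anc_trans n m l : m \in anc n -> l \in anc m -> l \in anc n.
Proof.
case/ancP => k lt_k <- /ancP [k' + <-]; rewrite tn_iter // => lt_k'.
by apply/ancP; exists (k' + k)%N; rewrite ?iterD //; lia.
Qed.

Lemma ancS n : n != r -> anc n = n |: anc (a n).
Proof.
move=> nr; apply/setP => m; rewrite in_setU1.
apply/ancP/orP => [[[|k] + <-]|[/eqP ->|/ancP [k + <-]]]; rewrite (tn_parent nr).
- by left.
- by right; apply/ancP; exists k; rewrite ?iterSr.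
- by exists 0%N.
- by exists k.+1; rewrite ?iterSr.
Qed.

Lemma parent_in_anc n : n != r -> a n \in anc n.
Proof. by move=> nr; rewrite ancS // setU1r // anc_refl. Qed.

Lemma parent_notin_anc n : n != r -> n \notin anc (a n).
Proof. by move=> nr; apply/negP => /tn_anc; rewrite (tn_parent nr); lia. Qed.

Lemma anc_root : anc r = [set r].
Proof.
apply/setP => m; rewrite inE; apply/ancP/eqP => [[k + <-]| ->].
  by rewrite tn_root; case: k.
by exists 0%N; rewrite ?tn_root.
Qed.

Lemma level_root : level 1 = [set r].
Proof.
by apply/setP => m; rewrite !inE; apply/eqP/eqP => [/tn_eq1|->]; rewrite ?tn_root.
Qed.

Lemma tn_eq_parent m n : m != r -> n != r -> tn m = tn n -> tn (a m) = tn (a n).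
Proof. by move=> mr nr; rewrite (tn_parent mr) (tn_parent nr) => -[]. Qed.

Section Cumulative.
Variables (R : realType) (M : nat).
Implicit Types (x G : V -> 'I_M -> R).

Local Notation cum := (@cum R V a tn M).

Lemma cum_telescope x G i :
  x r i = G r i -> (forall n, n != r -> x n i = G n i - G (a n) i) ->
  forall n, cum x n i = G n i.
Proof.
move=> x_root x_step n; have [k] := ubnP (tn n); elim: k n => // k IH n lt_nk.
have [->|nr] := eqVneq n r; first by rewrite /Defs.cum anc_root big_set1.
rewrite /Defs.cum ancS // big_setU1 ?parent_notin_anc //= -/(cum x (a n) i).
by rewrite IH ?x_step ?subrK // -ltnS -(tn_parent nr).
Qed.

Lemma cum_anc_le x n m i :
  (forall l, 0 <= x l i) -> m \in anc n -> cum x m i <= cum x n i.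
Proof.
move=> x_ge0 mn; have /finset.setIidPr anc_m : anc m \subset anc n.
  by apply/fintype.subsetP => l; apply: anc_trans.
rewrite /Defs.cum [leRHS](big_setID (anc m)) /= anc_m lerDl.
by apply: sumr_ge0 => l _.
Qed.

End Cumulative.

Section Construction.
Variables (R : realType) (M N : nat).
Variables (f : nat -> 'I_M -> R) (c : nat -> 'I_M -> 'I_N -> R) (h : nat -> 'I_M -> R).
Variables (p : V -> R) (d : V -> 'I_N -> R) (lam alp : nat -> R).
Variables (xLP : V -> 'I_M -> R) (yLP : V -> 'I_M -> 'I_N -> R) (etaLP uLP : V -> R).

Hypothesis f_ge0 : forall t i, (1 <= t <= T)%N -> 0 <= f t i.
Hypothesis h_gt0 : forall t i, (1 <= t <= T)%N -> 0 < h t i.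
Hypothesis p_gt0 : forall n, 0 < p n.
Hypothesis p_level : forall t, (1 <= t <= T)%N -> \sum_(n in level t) p n = 1.
Hypothesis lam_bounds : forall t, (2 <= t <= T)%N -> 0 <= lam t <= 1.
Hypothesis LPfeas : feasLP r a tn f c h d xLP yLP etaLP uLP.

Local Notation cum := (@cum R V a tn M).
Local Notation cost := (cost a tn f c).
Local Notation obj := (obj r a tn T f c p lam alp).
Local Notation By := (By tn h yLP).
Local Notation CL := (CL tn h yLP).
Local Notation MB := (MB a tn h yLP).
Local Notation MC := (MC a tn h yLP).
Local Notation xMS := (xMS r a tn h yLP).
Local Notation xTS := (xTS r a tn h yLP).
Local Notation etaMS := (etaMS r a tn f c h yLP uLP).
Local Notation etaTS := (etaTS r a tn f c h yLP uLP).

Lemma By_ge0 n i : 0 <= By n i.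
Proof.
have [_ y_ge0 _ _ _] := LPfeas.
by rewrite divr_ge0 ?sumr_ge0 // ltW ?h_gt0 ?tn_bounds.
Qed.

Lemma MB_root i : MB r i = By r i.
Proof. by rewrite /Defs.MB anc_root smax_set1. Qed.

Lemma MC_root i : MC r i = ceilR (By r i).
Proof. by rewrite /Defs.MC anc_root smax_set1 /Defs.CL tn_root level_root smax_set1. Qed.

Lemma cum_xMS n i : cum xMS n i = MB n i.
Proof.
by apply: cum_telescope => [|m mr]; rewrite /Defs.xMS ?eqxx ?MB_root ?(negbTE mr).
Qed.

Lemma cum_xTS n i : cum xTS n i = MC n i.
Proof.
by apply: cum_telescope => [|m mr]; rewrite /Defs.xTS ?eqxx ?MC_root ?(negbTE mr).
Qed.

Lemma By_le_MC n i : By n i <= MC n i.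
Proof.
apply: le_trans (le_smax (F := fun m => CL (tn m) i) (anc_refl n)).
apply: le_trans (Num.Theory.ceil_ge _).
by apply: (le_smax (F := fun l => By l i)); rewrite inE.
Qed.

Lemma MC_int n i : MC n i \is a Num.int.
Proof.
rewrite /Defs.MC; have [m _ ->] := smax_attained (fun m => CL (tn m) i) (anc_refl n).
exact: intr_int.
Qed.

Lemma MC_anc_le n m i : m \in anc n -> MC m i <= MC n i.
Proof.
move=> mn; apply: (smax_le (anc_refl m)) => l lm.
exact: (le_smax (F := fun m => CL (tn m) i)) (anc_trans mn lm).
Qed.

Lemma MC_same_period m n i : tn m = tn n -> MC m i = MC n i.
Proof.
suff MC_le m' n' : tn m' = tn n' -> MC m' i <= MC n' i.
  by move=> mn; apply/le_anti; rewrite !MC_le.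
move=> mn; apply: (smax_le (anc_refl m')) => _ /ancP [k lt_k <-].
have lt_k' : (k < tn n')%N by rewrite -mn.
rewrite (_ : tn (iter k a m') = tn (iter k a n')); last by rewrite !tn_iter // mn.
by apply: (le_smax (F := fun m => CL (tn m) i)); apply/ancP; exists k.
Qed.

Lemma xTS_ge0 n i : 0 <= xTS n i.
Proof.
rewrite /Defs.xTS; have [_|nr] := eqVneq n r.
  exact: le_trans (By_ge0 r i) (Num.Theory.ceil_ge _).
by rewrite subr_ge0 MC_anc_le ?parent_in_anc.
Qed.

Lemma xTS_int n i : xTS n i \is a Num.int.
Proof. by rewrite /Defs.xTS; case: eqP => _; rewrite ?intr_int ?rpredB ?MC_int. Qed.

Lemma xTS_same_period m n : tn m = tn n -> xTS m = xTS n.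
Proof.
move=> mn; apply/funext => i; rewrite /Defs.xTS.
have [mr|mr] := eqVneq m r; have [nr|nr] := eqVneq n r => //.
- by case/eqP: nr; apply: tn_eq1; rewrite -mn mr tn_root.
- by case/eqP: mr; apply: tn_eq1; rewrite mn nr tn_root.
by rewrite (MC_same_period i mn) (MC_same_period i (tn_eq_parent mr nr mn)).
Qed.

Lemma feasTS_construction : feasTS r a tn f c h d xTS yLP etaTS uLP.
Proof.
have [_ y_ge0 Ay _ u_ok] := LPfeas.
split; [split; [split=> //|] |].
- exact: xTS_ge0.
- by move=> n i; rewrite cum_xTS By_le_MC.
- move=> n nr; split; first by have [] := u_ok n nr.
  rewrite -lerBlDl; apply: (le_smax (F := fun m => cost xTS yLP m - uLP m)).
  by rewrite inE nr eqxx.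
- exact: xTS_int.
- exact: xTS_same_period.
Qed.

Lemma cost_le_cum x1 x2 y n :
  (forall i, cum x1 n i <= cum x2 n i) -> cost x1 y n <= cost x2 y n.
Proof.
move=> le_cum; rewrite /Defs.cost lerD2r ler_sum // => i _.
by rewrite ler_wpM2l ?f_ge0 ?tn_bounds.
Qed.

Lemma MB_le_cumLP n i : MB n i <= cum xLP n i.
Proof.
have [x_ge0 _ _ B_le_cum _] := LPfeas.
apply: (smax_le (anc_refl n)) => m mn.
exact: le_trans (B_le_cum m i) (cum_anc_le (x_ge0^~ i) mn).
Qed.

Lemma etaMS_le_LP n : (tn n < T)%N -> etaMS n <= etaLP n.
Proof.
have [_ _ _ _ u_ok] := LPfeas.
move=> /exists_child [m0 m0r am0].
have m0n : m0 \in children r a n by rewrite inE m0r am0 eqxx.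
apply: (smax_le m0n) => m; rewrite inE => /andP [mr /eqP <-].
rewrite lerBlDl; apply: le_trans (proj2 (u_ok m mr)).
by apply: cost_le_cum => i; rewrite cum_xMS MB_le_cumLP.
Qed.

Lemma wfac_ge0 n : 0 <= wfac r tn lam n.
Proof.
rewrite /wfac; case: eqP => [//|/eqP nr].
by rewrite subr_ge0; case/andP: (lam_bounds (tn_nonroot nr)).
Qed.

Lemma lamtil_ge0 n : 0 <= lamtil tn T lam n.
Proof.
rewrite /lamtil; case: eqP => // /eqP tnT.
have /lam_bounds/andP[] // : (2 <= (tn n).+1 <= T)%N by have := tn_bounds n; lia.
Qed.

Lemma obj_xMS_le_LP : obj xMS yLP etaMS uLP <= obj xLP yLP etaLP uLP.
Proof.
rewrite /Defs.obj ler_sum // => n _; apply: ler_wpM2l; first exact: ltW.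
rewrite lerD2r -!addrA lerD ?lerD2l //.
  apply: ler_sum => i _; rewrite cum_xMS ler_wpM2l ?MB_le_cumLP //.
  by rewrite mulr_ge0 ?wfac_ge0 ?f_ge0 ?tn_bounds.
have [tnT|tnT] := eqVneq (tn n) T; first by rewrite /lamtil tnT eqxx !mul0r.
by rewrite ler_wpM2l ?lamtil_ge0 ?etaMS_le_LP //; have := tn_bounds n; lia.
Qed.

Lemma p_root : p r = 1.
Proof.
have := tn_bounds r; rewrite tn_root => /p_level.
by rewrite level_root big_set1.
Qed.

Lemma obj_xTS_sub_xMS :
  obj xTS yLP etaTS uLP - obj xMS yLP etaMS uLP = VMS_UB r a tn T f c h p lam yLP uLP.
Proof.
rewrite obj_sub /Defs.VMS_UB; under eq_bigr do rewrite mulrDr.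
rewrite big_split /=; congr (_ + _).
  rewrite (bigD1 r) //= p_root /wfac eqxx mul1r; congr (_ + _).
    by apply: eq_bigr => i _; rewrite cum_xTS cum_xMS MC_root MB_root mul1r.
  apply: eq_bigr => n nr; rewrite (negbTE nr) -mulrA !mulr_sumr.
  by apply: eq_bigr => i _; rewrite cum_xTS cum_xMS !mulrA.
rewrite [RHS]big_mkcond; apply: eq_bigr => n _; rewrite /lamtil.
by case: eqP => _ /=; rewrite ?mul0r ?mulr0 ?mulrA.
Qed.

End Construction.
End ScenarioTree.

Theorem theorem2 (R : realType) (V : finType) (r : V) (a : V -> V) (tn : V -> nat)
    (T M N : nat)
    (f : nat -> 'I_M -> R) (c : nat -> 'I_M -> 'I_N -> R) (h : nat -> 'I_M -> R)
    (p : V -> R) (d : V -> 'I_N -> R) (lam alp : nat -> R)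
    (xLP : V -> 'I_M -> R) (yLP : V -> 'I_M -> 'I_N -> R) (etaLP uLP : V -> R) :
  (2 <= T)%N -> (1 <= M)%N -> (1 <= N)%N ->
  scenario_tree r a tn T ->
  (forall t i, (1 <= t <= T)%N -> 0 <= f t i) ->
  (forall t i j, (1 <= t <= T)%N -> 0 <= c t i j) ->
  (forall t i, (1 <= t <= T)%N -> 0 < h t i) ->
  (forall n, 0 < p n) ->
  (forall t, (1 <= t <= T)%N -> \sum_(n in level tn t) p n = 1) ->
  (forall n, (tn n < T)%N -> \sum_(m in children r a n) p m = p n) ->
  (forall n j, 0 <= d n j) ->
  (forall t, (2 <= t <= T)%N -> 0 <= lam t <= 1) ->
  (forall t, (2 <= t <= T)%N -> 0 < alp t < 1) ->
  LPoptimal r a tn T f c h p d lam alp xLP yLP etaLP uLP ->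
  (VMS r a tn T f c h p d lam alp
     <= (VMS_UB r a tn T f c h p lam yLP uLP)%:E)%E.
Proof.
move=> _ _ _ tree f_ge0 _ h_gt0 p_gt0 p_level _ _ lam_bounds _ LPopt.
have LPfeas := proj1 LPopt.
have zTS_le := zTS_le_obj T p lam alp (feasTS_construction tree h_gt0 LPfeas).
have MS_le_LP := obj_xMS_le_LP tree alp f_ge0 p_gt0 lam_bounds LPfeas.
apply: le_trans (leeB zTS_le (obj_le_zMS LPopt)) _.
by rewrite -EFinB lee_fin -(obj_xTS_sub_xMS tree f c h lam alp yLP uLP p_level) lerB.
Qed.
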